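(* Let $(T_1,\dots,T_k)$ be a tuple of contractions on a Hilbert space $\mathcal{H}$ and $q_{ij}\in\mathbb{T}$ ($1\le i<j\le k$) such that $T_iT_j=q_{ij}T_jT_i$ and $T_iT_j^*=\overline{q_{ij}}\,T_j^*T_i$ for $1\le i<j\le k$. Then for every subset $u\subseteq\{1,\dots,k\}$, \[ S(u)=\sum_{v\subseteq u}(-1)^{|v|}(T^{e(v)})^*T^{e(v)}\ge 0, \] where for $v=\{n_1<\dots<n_r\}$, $T^{e(v)}=T_{n_1}\cdots T_{n_r}$ (and $T^{e(\emptyset)}=I$). *)

From HB Require Import structures.
From mathcomp Require Import all_boot all_order all_algebra.
From mathcomp Require Import complex.
From mathcomp Require Import reals.
Set Implicit Arguments. Unset Strict Implicit. Unset Printing Implicit Defensive.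
Import Order.TTheory GRing.Theory Num.Theory.
Local Open Scope ring_scope.

Section Hilbert.
Variables (R : realType) (V : lmodType R[i]) (ip : V -> V -> R[i]).

Definition hnorm (x : V) : R := Num.sqrt (complex.Re (ip x x)).

Definition is_inner_product : Prop :=
  [/\ (forall (a : R[i]) (x y z : V), ip (a *: x + y) z = a * ip x z + ip y z),
      (forall x y : V, ip y x = (ip x y)^*),
      (forall x : V, 0 <= ip x x) &
      (forall x : V, ip x x = 0 -> x = 0)].

Definition hcauchy (u : nat -> V) : Prop :=
  forall e : R, 0 < e -> exists N : nat,
    forall m n : nat, (N <= m)%N -> (N <= n)%N -> hnorm (u m - u n) < e.

Definition hconverges (u : nat -> V) : Prop :=
  exists l : V, forall e : R, 0 < e -> exists N : nat,
    forall n : nat, (N <= n)%N -> hnorm (u n - l) < e.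

Definition is_hilbert_space : Prop :=
  is_inner_product /\ (forall u : nat -> V, hcauchy u -> hconverges u).

Definition is_linear_op (T : V -> V) : Prop :=
  forall (a : R[i]) (x y : V), T (a *: x + y) = a *: T x + T y.

Definition is_contraction (T : V -> V) : Prop :=
  is_linear_op T /\ forall x : V, hnorm (T x) <= hnorm x.

Definition is_adjoint (T Ts : V -> V) : Prop :=
  forall x y : V, ip (T x) y = ip x (Ts y).

Definition is_positive_op (S : V -> V) : Prop :=
  forall x : V, 0 <= ip (S x) x.

Definition Tmono (k : nat) (T : 'I_k -> V -> V) (v : {set 'I_k}) : V -> V :=
  foldr (fun i f => T i \o f) id (enum v).

Definition Tmono_adj (k : nat) (Ts : 'I_k -> V -> V) (v : {set 'I_k}) : V -> V :=
  foldr (fun i f => f \o Ts i) id (enum v).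

Definition Sop (k : nat) (T Ts : 'I_k -> V -> V) (u : {set 'I_k}) : V -> V :=
  fun x => \sum_(v : {set 'I_k} | v \subset u)
             (-1) ^+ #|v| *: Tmono_adj Ts v (Tmono T v x).

End Hilbert.

From HB Require Import structures.
From mathcomp Require Import all_boot all_order all_algebra.
From mathcomp Require Import complex.
From mathcomp Require Import reals.
From mathcomp Require Import ring lra.
Import Order.TTheory GRing.Theory Num.Theory.
Set Implicit Arguments. Unset Strict Implicit. Unset Printing Implicit Defensive.
Local Open Scope ring_scope.

(* Let b_u(x, y) = Re sum_{v <= u} (-1)^|v| <T^e(v) x, T^e(v) y>, so that
   <S(u) x, x> = b_u(x, x).  We show b_u(x, x) >= 0 by adding the indices of u
   in increasing order.  If j exceeds every index of u, then
   b_{u+j}(x, x) = b_u(x, x) - b_u(T_j x, T_j x), and the commutation relations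
   make T_j and T_j^* adjoint for b_u, so P = T_j^* T_j is b_u-symmetric and
   b_u(T_j x, T_j x) = b_u(P x, x).  Cauchy-Schwarz for the positive semidefinite
   form b_u gives a_n^2 <= a_(n+1) b_u(x, x) for a_n = b_u(P^(2^n) x, x), while
   a_n stays bounded since P is a contraction; this forces a_0 <= b_u(x, x). *)

Lemma discriminant_le (R : realFieldType) (A B C : R) :
  0 <= C -> (forall s, 0 <= A + 2 * s * B + s ^+ 2 * C) -> B ^+ 2 <= A * C.
Proof.
move=> C_ge0 H.
have [C0|C_neq0] := eqVneq C 0.
  have [B0|B_neq0] := eqVneq B 0; first by rewrite B0 C0 expr0n mulr0.
  have := H (- (A + 1) / (2 * B)); rewrite C0 mulr0 addr0.
  have -> : 2 * (- (A + 1) / (2 * B)) * B = - (A + 1) by field; rewrite B_neq0.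
  lra.
have C_gt0 : 0 < C by rewrite lt_def C_neq0.
have := H (- B / C).
have -> : A + 2 * (- B / C) * B + (- B / C) ^+ 2 * C = A - B ^+ 2 / C by field.
by rewrite subr_ge0 ler_pdivrMr.
Qed.

Lemma le_of_sqr_le_next_bounded (R : archiRealFieldType) (a : nat -> R) (c K : R) :
  0 <= c -> (forall n, a n ^+ 2 <= a n.+1 * c) -> (forall n, a n.+1 <= K) ->
  a 0%N <= c.
Proof.
move=> c_ge0 a_sqr a_bound; rewrite leNgt; apply/negP => c_lt_a0.
(* With a_0 = c + d, d > 0, the sequence grows at least linearly. *)
have c_gt0 : 0 < c.
  rewrite lt_def c_ge0 andbT; apply/eqP => c0.
  by have := a_sqr 0%N; rewrite c0 mulr0 in c_lt_a0 *; nra.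
pose d := a 0%N - c; have d_gt0 : 0 < d by rewrite subr_gt0.
have a_lin n : c + n.+1%:R * d <= a n.
  elim: n => [|n IH]; first by rewrite mul1r addrC subrK.
  rewrite -(ler_pM2r c_gt0); apply: le_trans (a_sqr n).
  have lin_ge0 : 0 <= c + n.+1%:R * d by rewrite addr_ge0 ?mulr_ge0 ?ltW.
  apply: le_trans (_ : (c + n.+1%:R * d) ^+ 2 <= _); last first.
    by rewrite ler_sqr ?nnegrE // (le_trans lin_ge0).
  have n_ge0 : 0 <= n%:R :> R by [].
  have := mulr_ge0 (mulr_ge0 n_ge0 (ltW c_gt0)) (ltW d_gt0).
  have := sqr_ge0 (n.+1%:R * d).
  rewrite -[n.+2]addn1 -[n.+1]addn1 !natrD; nra.
pose m := Num.bound (`|K| / d).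
have := archi_boundP (divr_ge0 (normr_ge0 K) (ltW d_gt0)).
rewrite -/m ltr_pdivrMr // => K_lt.
have := le_trans (a_lin m.+1) (a_bound m).
have := ler_norm K.
have m_ge0 : 0 <= m%:R :> R by [].
rewrite -[m.+2]addn2 natrD; nra.
Qed.

Section RealBilinearForm.
Variables (R : archiRcfType) (V : lmodType R[i]) (f : V -> V -> R).
Hypotheses (fDl : forall x y z, f (x + y) z = f x z + f y z)
  (fZl : forall (t : R) x z, f (t%:C%C *: x) z = t * f x z)
  (fC : forall x y, f x y = f y x)
  (f_ge0 : forall x, 0 <= f x x).

Lemma form_cauchy_schwarz x y : f x y ^+ 2 <= f x x * f y y.
Proof.
have fDr x1 x2 z : f z (x1 + x2) = f z x1 + f z x2 by rewrite fC fDl !(fC z).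
have fZr t x1 z : f z (t%:C%C *: x1) = t * f z x1 by rewrite fC fZl fC.
apply: discriminant_le (f_ge0 y) _ => s.
have := f_ge0 (x + s%:C%C *: y).
by rewrite fDl fZl !fDr !fZr (fC y x); congr (_ <= _); ring.
Qed.

Lemma form_le_of_sym_bounded_orbit (P : V -> V) (K : R) x :
  (forall z w, f (P z) w = f z (P w)) ->
  (forall n, f (iter n P x) (iter n P x) <= K) ->
  f (P x) x <= f x x.
Proof.
move=> P_sym P_bound.
have iter_sym n z w : f (iter n P z) w = f z (iter n P w).
  by elim: n z w => [|n IH] z w //=; rewrite P_sym IH -iterSr.
pose a n := f (iter (2 ^ n) P x) x.
have a_next n : a n.+1 = f (iter (2 ^ n) P x) (iter (2 ^ n) P x).
  by rewrite /a expnS mul2n -addnn iterD iter_sym.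
apply: (@le_of_sqr_le_next_bounded _ a _ K (f_ge0 x)) => n; rewrite a_next //.
exact: form_cauchy_schwarz.
Qed.

End RealBilinearForm.

Section ComplexRe.
Variable R : rcfType.
Implicit Types z w : R[i].

Lemma ReD z w : complex.Re (z + w) = complex.Re z + complex.Re w.
Proof. by case: z; case: w. Qed.

Lemma Re_realM (t : R) z : complex.Re (t%:C%C * z) = t * complex.Re z.
Proof. by case: z => a b /=; rewrite mul0r subr0. Qed.

Lemma ReJ z : complex.Re z^* = complex.Re z.
Proof. by case: z. Qed.

End ComplexRe.

Section LinearOp.
Variables (R : realType) (V : lmodType R[i]) (T : V -> V).
Hypothesis T_lin : is_linear_op T.

Lemma linear_op0 : T 0 = 0.
Proof.
have := T_lin 1 0 0; rewrite scaler0 add0r scale1r => T0.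
by apply: (addrI (T 0)); rewrite addr0 -T0.
Qed.

Lemma linear_opD x y : T (x + y) = T x + T y.
Proof. by have := T_lin 1 x y; rewrite !scale1r. Qed.

Lemma linear_opZ a x : T (a *: x) = a *: T x.
Proof. by have := T_lin a x 0; rewrite !addr0 linear_op0 addr0. Qed.

End LinearOp.

Section InnerProduct.
Variables (R : realType) (V : lmodType R[i]) (ip : V -> V -> R[i]).
Hypothesis ipP : is_inner_product ip.

Definition sqnorm (x : V) : R := complex.Re (ip x x).

Let ip_lin a x y z : ip (a *: x + y) z = a * ip x z + ip y z.
Proof. by case: ipP. Qed.

Lemma ipC x y : ip y x = (ip x y)^*.
Proof. by case: ipP. Qed.

Lemma ip0l z : ip 0 z = 0.
Proof.
have := ip_lin 1 0 0 z; rewrite scaler0 add0r mul1r => ip0.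
by apply: (addrI (ip 0 z)); rewrite addr0 -ip0.
Qed.

Lemma ipDl x y z : ip (x + y) z = ip x z + ip y z.
Proof. by have := ip_lin 1 x y z; rewrite scale1r mul1r. Qed.

Lemma ipZl a x z : ip (a *: x) z = a * ip x z.
Proof. by have := ip_lin a x 0 z; rewrite !addr0 ip0l addr0. Qed.

Lemma ipZr a x z : ip z (a *: x) = a^* * ip z x.
Proof. by rewrite ipC ipZl rmorphM /= -ipC. Qed.

Lemma ip_sqnorm x : ip x x = (sqnorm x)%:C%C.
Proof.
case: ipP => _ _ /(_ x); rewrite /sqnorm; case: (ip x x) => a b.
by rewrite lecE /= => /andP[/eqP -> _].
Qed.

Lemma sqnorm_ge0 x : 0 <= sqnorm x.
Proof. by case: ipP => _ _ /(_ x); rewrite ip_sqnorm ler0c. Qed.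

Lemma Re_ip_cauchy_schwarz x y :
  complex.Re (ip x y) ^+ 2 <= sqnorm x * sqnorm y.
Proof.
apply: (@form_cauchy_schwarz _ _ (fun x y => complex.Re (ip x y))) => {x y}.
- by move=> x y z; rewrite ipDl ReD.
- by move=> t x z; rewrite ipZl Re_realM.
- by move=> x y; rewrite ipC ReJ.
- exact: sqnorm_ge0.
Qed.

Lemma adjointC {T Ts : V -> V} :
  is_adjoint ip T Ts -> forall y z, ip (Ts y) z = ip y (T z).
Proof. by move=> T_adj y z; rewrite ipC -T_adj -ipC. Qed.

Lemma contraction_sqnorm T x : is_contraction ip T -> sqnorm (T x) <= sqnorm x.
Proof. by case=> _ /(_ x); rewrite /hnorm ler_sqrt // sqnorm_ge0. Qed.

(* [|T^* w|^2 = Re <w, T T^* w> <= |w| |T T^* w| <= |w| |T^* w|] *)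
Lemma adjoint_sqnorm_le T Ts x :
  (forall y, sqnorm (T y) <= sqnorm y) -> is_adjoint ip T Ts ->
  sqnorm (Ts x) <= sqnorm x.
Proof.
move=> T_contr T_adj.
have Tsx_ge0 := sqnorm_ge0 (Ts x); have x_ge0 := sqnorm_ge0 x.
have Tsx_ip : sqnorm (Ts x) = complex.Re (ip x (T (Ts x))).
  by rewrite /sqnorm (adjointC T_adj).
have : sqnorm (Ts x) ^+ 2 <= sqnorm x * sqnorm (Ts x).
  rewrite {1}Tsx_ip; apply: le_trans (Re_ip_cauchy_schwarz _ _) _.
  exact: ler_wpM2l.
nra.
Qed.

End InnerProduct.

Section OperatorProducts.
Variables (R : realType) (V : lmodType R[i]) (ip : V -> V -> R[i]) (I : eqType).
Variables (T Ts : I -> V -> V).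
Hypotheses (ipP : is_inner_product ip) (T_lin : forall i, is_linear_op (T i)).
Hypothesis T_contr : forall i x, sqnorm ip (T i x) <= sqnorm ip x.
Hypothesis T_adj : forall i, is_adjoint ip (T i) (Ts i).

Definition oprod (l : seq I) : V -> V := foldr (fun i f => T i \o f) id l.
Definition oprod_adj (l : seq I) : V -> V := foldr (fun i f => f \o Ts i) id l.

Lemma oprod_rcons l j x : oprod (rcons l j) x = oprod l (T j x).
Proof. by elim: l => //= i l ->. Qed.

Lemma oprodD l x y : oprod l (x + y) = oprod l x + oprod l y.
Proof. by elim: l => //= i l ->; rewrite linear_opD. Qed.

Lemma oprodZ l a x : oprod l (a *: x) = a *: oprod l x.
Proof. by elim: l => //= i l ->; rewrite linear_opZ. Qed.

Lemma oprod_commute l (S : V -> V) (c : I -> R[i]) :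
  (forall i, i \in l -> forall w, T i (S w) = c i *: S (T i w)) ->
  forall w, oprod l (S w) = (\prod_(i <- l) c i) *: S (oprod l w).
Proof.
elim: l => [|i l IH] TS w /=; first by rewrite big_nil scale1r.
rewrite IH => [|i' i'_l]; last by apply: TS; rewrite inE i'_l orbT.
by rewrite linear_opZ // TS ?mem_head // scalerA big_cons mulrC.
Qed.

Lemma oprod_sqnorm_le l x : sqnorm ip (oprod l x) <= sqnorm ip x.
Proof. by elim: l => //= i l IH; apply: le_trans (T_contr _ _) IH. Qed.

Lemma oprod_adjP l y x : ip (oprod_adj l y) x = ip y (oprod l x).
Proof. by elim: l y => //= i l IH y; rewrite IH (adjointC ipP (T_adj i)). Qed.

End OperatorProducts.

Lemma sum_subsets_setU1 (M : nmodType) (X : finType) (F : {set X} -> M)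
    (a : X) (u : {set X}) : a \notin u ->
  \sum_(v : {set X} | v \subset a |: u) F v =
  \sum_(v : {set X} | v \subset u) F v + \sum_(v : {set X} | v \subset u) F (a |: v).
Proof.
move=> a_notin_u; rewrite (bigID (fun v : {set X} => a \in v)) /= addrC; congr (_ + _).
  by apply: eq_bigl => v; rewrite -subsetD1 setU1K.
rewrite (reindex_onto (fun v : {set X} => a |: v) (fun v => v :\ a)) /=; last first.
  by move=> v /andP[_ a_v]; rewrite setD1K.
apply: eq_bigl => w; rewrite setU11 andbT; apply/andP/idP => [[wu /eqP <-]|wu].
  by rewrite -(setU1K a_notin_u) setSD.
have a_notin_w : a \notin w := contra (subsetP wu a) a_notin_u.
by rewrite setUS // setU1K.
Qed.

Lemma sorted_enum_ord_set k (A : {set 'I_k}) :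
  sorted (fun i j : 'I_k => (i < j)%N) (enum A).
Proof.
suff : sorted ltn (map val (enum A)) by rewrite sorted_map.
rewrite -[enum _](eq_filter (mem_enum _)) -(eq_filter (mem_map val_inj _)).
by rewrite -filter_map (sorted_filter ltn_trans) // unlock val_ord_enum iota_ltn_sorted.
Qed.

Lemma enum_setU1_gt k (j : 'I_k) (v : {set 'I_k}) :
  (forall i, i \in v -> (i < j)%N) -> enum (j |: v) = rcons (enum v) j.
Proof.
move=> v_lt_j.
apply: (irr_sorted_eq (leT := fun i j : 'I_k => (i < j)%N)) => [i1 i2 i3|i|||i].
- exact: ltn_trans.
- by rewrite /= ltnn.
- exact: sorted_enum_ord_set.
- have := sorted_enum_ord_set v; have : all (fun i : 'I_k => (i < j)%N) (enum v).
    by apply/allP => i; rewrite mem_enum; apply: v_lt_j.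
  case: (enum v) => // i s /allP s_lt_j /= i_s.
  by rewrite rcons_path i_s s_lt_j // mem_last.
- by rewrite mem_enum mem_rcons !inE mem_enum.
Qed.

Lemma ord_set_ind_max k (P : {set 'I_k} -> Prop) : P set0 ->
  (forall (j : 'I_k) (u : {set 'I_k}),
     (forall i, i \in u -> (i < j)%N) -> P u -> P (j |: u)) ->
  forall u, P u.
Proof.
move=> P0 PU u; have [n] := ubnP #|u|; elim: n u => // n IH u.
have [-> //|[j0 j0_u]] := set_0Vmem u.
have [j j_u j_max] := arg_maxnP (fun i : 'I_k => i : nat) j0_u.
have {}j_u : j \in u := j_u.
move=> u_lt_n; rewrite -(setD1K j_u).
apply: PU => [i|]; last by apply: IH; move: u_lt_n; rewrite (cardsD1 j u) j_u add1n ltnS.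
rewrite in_setD1 => /andP[i_neq_j i_u]; have i_le_j : (i <= j)%N := j_max i i_u.
by rewrite ltn_neqAle i_le_j andbT; apply: contra i_neq_j => /eqP/val_inj ->.
Qed.

Section Sform.
Variables (R : realType) (V : lmodType R[i]) (ip : V -> V -> R[i]) (k : nat).
Variables (T Ts : 'I_k -> V -> V) (q : 'I_k -> 'I_k -> R[i]).
Hypotheses (ipP : is_inner_product ip) (T_contr : forall i, is_contraction ip (T i)).
Hypothesis T_adj : forall i, is_adjoint ip (T i) (Ts i).
Hypothesis TT : forall i j : 'I_k, (i < j)%N -> forall x : V,
  T i (T j x) = q i j *: T j (T i x).
Hypothesis TTs : forall i j : 'I_k, (i < j)%N -> forall x : V,
  T i (Ts j x) = (q i j)^* *: Ts j (T i x).

Let T_lin i : is_linear_op (T i). Proof. by case: (T_contr i). Qed.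
Let T_sqnorm i x : sqnorm ip (T i x) <= sqnorm ip x.
Proof. exact: contraction_sqnorm. Qed.

Definition Sform (u : {set 'I_k}) (x y : V) : R :=
  \sum_(v : {set 'I_k} | v \subset u)
    (-1) ^+ #|v| * complex.Re (ip (oprod T (enum v) x) (oprod T (enum v) y)).

Lemma Sop_ip u x : ip (Sop T Ts u x) x = (Sform u x x)%:C%C.
Proof.
rewrite /Sop (big_morph (ip^~ x) (fun y z => ipDl ipP y z x) (ip0l ipP x)).
rewrite rmorph_sum; apply: eq_bigr => v _.
by rewrite ipZl // (oprod_adjP ipP T_adj) ip_sqnorm // rmorphM rmorphXn rmorphN1.
Qed.

Lemma SformDl u x y z : Sform u (x + y) z = Sform u x z + Sform u y z.
Proof.
rewrite -big_split; apply: eq_bigr => v _.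
by rewrite oprodD // ipDl // ReD mulrDr.
Qed.

Lemma SformZl u (t : R) x z : Sform u (t%:C%C *: x) z = t * Sform u x z.
Proof.
rewrite mulr_sumr; apply: eq_bigr => v _.
by rewrite oprodZ // ipZl // Re_realM mulrCA.
Qed.

Lemma SformC u x y : Sform u x y = Sform u y x.
Proof. by apply: eq_bigr => v _; rewrite (ipC ipP) ReJ. Qed.

Lemma Sform_set0 x : Sform set0 x x = sqnorm ip x.
Proof.
rewrite /Sform (eq_bigl (pred1 set0)) => [|v]; last by rewrite subset0.
by rewrite big_pred1_eq cards0 expr0 mul1r enum_set0.
Qed.

Lemma Sform_le u x : Sform u x x <= sqnorm ip x *+ 2 ^ #|u|.
Proof.
rewrite -card_powerset -sumr_const.
rewrite (eq_bigl (fun v : {set 'I_k} => v \subset u)) => [|v]; last by rewrite powersetE.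
apply: ler_sum => v _; have v_le := oprod_sqnorm_le T_sqnorm (enum v) x.
rewrite -signr_odd; case: (odd _); rewrite ?expr0 ?mul1r // expr1 mulN1r.
by apply: le_trans (sqnorm_ge0 ipP x); rewrite oppr_le0 sqnorm_ge0.
Qed.

Section AddMaxIndex.
Variables (j : 'I_k) (u : {set 'I_k}).
Hypothesis u_lt_j : forall i, i \in u -> (i < j)%N.

Lemma Sform_setU1 x : Sform (j |: u) x x = Sform u x x - Sform u (T j x) (T j x).
Proof.
have j_notin_u : j \notin u by apply/negP => /u_lt_j; rewrite ltnn.
rewrite /Sform sum_subsets_setU1 // -sumrN; congr (_ + _); apply: eq_bigr => v vu.
have j_notin_v : j \notin v := contra (subsetP vu j) j_notin_u.
rewrite enum_setU1_gt => [|i /(subsetP vu)/u_lt_j //].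
by rewrite !oprod_rcons cardsU1 j_notin_v add1n exprS mulN1r mulNr.
Qed.

(* The factors [q i j] picked up by [T j] and by [Ts j] cancel. *)
Lemma Sform_adj x y : Sform u (T j x) y = Sform u x (Ts j y).
Proof.
apply: eq_bigr => v vu; congr (_ * _).
have v_lt_j i : i \in enum v -> (i < j)%N by rewrite mem_enum => /(subsetP vu)/u_lt_j.
rewrite (oprod_commute T_lin (c := fun i => q i j)) => [|i /v_lt_j]; last exact: TT.
rewrite (oprod_commute T_lin (c := fun i => (q i j)^*)) => [|i /v_lt_j]; last exact: TTs.
rewrite ipZl // ipZr // T_adj rmorph_prod /=.
by under [in RHS]eq_bigr do rewrite conjCK.
Qed.

End AddMaxIndex.

Lemma Sform_ge0 u x : 0 <= Sform u x x.
Proof.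
move: x; elim/ord_set_ind_max: u => [x|j u u_lt_j IH x].
  by rewrite Sform_set0 sqnorm_ge0.
rewrite Sform_setU1 // subr_ge0.
pose P z := Ts j (T j z).
have P_sym z w : Sform u (P z) w = Sform u z (P w).
  by rewrite SformC -Sform_adj // SformC Sform_adj.
have P_sqnorm z : sqnorm ip (P z) <= sqnorm ip z.
  exact: le_trans (adjoint_sqnorm_le ipP _ (T_sqnorm j) (T_adj j)) (T_sqnorm j z).
rewrite Sform_adj // SformC.
apply: (form_le_of_sym_bounded_orbit (K := sqnorm ip x *+ 2 ^ #|u|)
  (SformDl u) (SformZl u) (SformC u) IH P_sym) => n.
apply: le_trans (Sform_le _ _) _; rewrite ler_wMn2r //.
by elim: n => //= n IHn; apply: le_trans (P_sqnorm _) IHn.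
Qed.

Lemma Sop_positive u : is_positive_op ip (Sop T Ts u).
Proof. by move=> x; rewrite Sop_ip ler0c Sform_ge0. Qed.

End Sform.

Theorem proposition3p3 (R : realType) (V : lmodType R[i]) (ip : V -> V -> R[i])
  (k : nat) (T Ts : 'I_k -> V -> V) (q : 'I_k -> 'I_k -> R[i]) :
  is_hilbert_space ip ->
  (forall i, is_contraction ip (T i)) ->
  (forall i, is_adjoint ip (T i) (Ts i)) ->
  (forall i j : 'I_k, (i < j)%N -> `|q i j| = 1) ->
  (forall i j : 'I_k, (i < j)%N -> forall x : V,
      T i (T j x) = q i j *: T j (T i x)) ->
  (forall i j : 'I_k, (i < j)%N -> forall x : V,
      T i (Ts j x) = (q i j)^* *: Ts j (T i x)) ->
  forall u : {set 'I_k}, is_positive_op ip (Sop T Ts u).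
Proof.
move=> [ipP _] T_contr T_adj _ TT TTs u.
exact: Sop_positive ipP T_contr T_adj TT TTs u.
Qed.
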